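(* For any two objects (instance-databases) $A$ and $B$ of the category $\mathbf{DB}$ we have $T(A+B)=TA+TB$. Consequently $A+A$ is not isomorphic to $A$ in $\mathbf{DB}$.
   Context: The category $\mathbf{DB}$: objects are instance-databases, i.e. sets $A$ of finite-arity relations (sets of tuples), each containing the empty relation $\bot$; $\bot^0=\{\bot\}$. For an object $A$, $TA$ is the set of all views of $A$: all relations obtained by evaluating finite terms of the relational algebra SPJRU (select, project, join, rename, union) built from the relations in $A$ and domain constants; $A\subseteq TA$. Morphisms $f:A\to B$ are view-based mappings (finite sets of view-maps, each a SPJRU query over $A$ whose result is included, via a tuple mapping/projection, in a relation of $B$, and compositions thereof); each morphism $f$ has an information flux $\widetilde f$ (for an atomic morphism, $T$ applied to the set of transmitted views; $\widetilde{f\circ g}=\widetilde f\cap\widetilde g$), and morphisms are identified when their fluxes coincide. Two objects $A,B$ are isomorphic in $\mathbf{DB}$ iff $TA=TB$. The object $A+B$ is the disjoint union of $A$ and $B$ regarded as two mutually isolated databases with completely disjoint database management systems, so that no query may use relations from both; on morphisms $\partial_0(f+g)=\partial_0(f)+\partial_0(g)$, $\partial_1(f+g)=\partial_1(f)+\partial_1(g)$, where $\partial_0,\partial_1$ give the source relations used and the target views produced. On sets of views, $+$ denotes disjoint union. *)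

From mathcomp Require Import all_boot.
From mathcomp Require Import boolp classical_sets cardinality.
Set Implicit Arguments. Unset Strict Implicit. Unset Printing Implicit Defensive.
Local Open Scope classical_set_scope.

Section DB.
Variable D : Type.

(* A relation: a set of tuples (tuples are sequences over D). *)
Definition relation := set (seq D).

Definition bot : relation := set0.

Definition is_rel (r : relation) : Prop :=
  finite_set r /\ exists n, forall t, r t -> size t = n.

(* A plain database lives in
   one DBMS; the coproduct A + B puts A and B into two disjoint DBMSs,
   distinguished by the prefix false / true of the location. *)
Definition loc := seq bool.

(* An object of DB: a set of (located) relations containing bottom. *)
Definition obj := set (loc * relation).

Definition is_db (A : obj) : Prop :=
  (exists x, A x) /\
  forall l r, A (l, r) -> A (l, bot) /\ is_rel r.

Definition dsum (S1 S2 : obj) : obj :=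
  fun x => match x with
           | (false :: l, r) => S1 (l, r)
           | (true :: l, r) => S2 (l, r)
           | ([::], _) => False
           end.

Definition same_arity (r s : relation) : Prop :=
  exists n, (forall t, r t -> size t = n) /\ (forall t, s t -> size t = n).

(* T A : all views of A, i.e. values of SPJRU terms (unnamed perspective:
   select attr=attr, select attr=const, project/rename (by a list of
   attribute positions, which also covers renaming/permutation),
   join (cartesian product; general joins are products followed by
   selections/projections), union) built from relations of A and domain
   constants.  A query may only use relations of a single DBMS (location),
   and its result is a view in that DBMS. *)
Inductive T (A : obj) : obj :=
| T_base l r : A (l, r) -> T A (l, r)
| T_const l r (d : D) : A (l, r) -> T A (l, [set [:: d]])
| T_sel l r (i j : nat) : T A (l, r) ->
    T A (l, [set t | r t /\ onth t i = onth t j /\ i < size t /\ j < size t])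
| T_selc l r (i : nat) (d : D) : T A (l, r) ->
    T A (l, [set t | r t /\ onth t i = Some d])
| T_proj l r (p : seq nat) : T A (l, r) ->
    T A (l, [set t | exists2 u, r u & map (onth u) p = map Some t])
| T_join l r s : T A (l, r) -> T A (l, s) ->
    T A (l, [set t | exists u v, [/\ r u, s v & t = u ++ v]])
| T_union l r s : T A (l, r) -> T A (l, s) -> same_arity r s ->
    T A (l, r `|` s).

(* Isomorphism in DB, via the characterization A ~= B iff TA = TB. *)
Definition db_iso (A B : obj) : Prop := T A = T B.

End DB.

From mathcomp Require Import all_boot.
From mathcomp Require Import boolp classical_sets.

(* Every SPJRU term stays inside the DBMS of its base relations, so the views
   of A + B are exactly the views of A tagged [false] and those of B tagged
   [true].  An object S with S + S = S must be empty (compare locations by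
   length), while T A contains A, which is nonempty: hence A + A and A have
   different views. *)

Local Open Scope classical_set_scope.

Lemma T_relocate (D : Type) (A C : obj D) (f : loc -> loc) :
  (forall l r, A (l, r) -> C (f l, r)) ->
  forall x, T A x -> T C (f x.1, x.2).
Proof.
move=> AC x; elim=> /=.
- by move=> l r Alr; apply/T_base/AC.
- by move=> l r d Alr; apply: (@T_const _ _ _ r); apply: AC.
- by move=> l r i j _ IH; apply: T_sel.
- by move=> l r i d _ IH; apply: T_selc.
- by move=> l r p _ IH; apply: T_proj.
- by move=> l r s _ IH1 _ IH2; apply: T_join.
- by move=> l r s _ IH1 _ IH2 hs; apply: T_union.
Qed.

Lemma T_dsum_sub (D : Type) (A B : obj D) : T (dsum A B) `<=` dsum (T A) (T B).
Proof.
move=> x; elim=> /=.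
- by move=> [|[] l] r //= Ar; apply: T_base.
- by move=> [|[] l] r d //= Ar; apply: (@T_const _ _ _ r).
- by move=> [|[] l] r i j _ //= IH; apply: T_sel.
- by move=> [|[] l] r i d _ //= IH; apply: T_selc.
- by move=> [|[] l] r p _ //= IH; apply: T_proj.
- by move=> [|[] l] r s _ //= IH1 _ IH2; apply: T_join.
- by move=> [|[] l] r s _ //= IH1 _ IH2 hs; apply: T_union.
Qed.

Lemma T_dsum (D : Type) (A B : obj D) : T (dsum A B) = dsum (T A) (T B).
Proof.
apply/seteqP; split; first exact: T_dsum_sub.
move=> [[|[] l] r] //= TXlr.
- exact: (@T_relocate _ B _ (cons true) (fun _ _ => id) (l, r) TXlr).
- exact: (@T_relocate _ A _ (cons false) (fun _ _ => id) (l, r) TXlr).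
Qed.

Lemma dsum_idem_eq0 (D : Type) (S : obj D) : dsum S S = S -> S = set0.
Proof.
move=> SS; apply/seteqP; split=> [[l r] Slr|//]; move: Slr.
elim: l r => [|b l IH] r; first by rewrite -SS.
by rewrite -SS; case: b; apply: IH.
Qed.

Theorem proposition1 (D : Type) (A B : obj D) :
  is_db A -> is_db B ->
  T (dsum A B) = dsum (T A) (T B) /\ ~ db_iso (dsum A A) A.
Proof.
move=> [[[l r] Alr] _] _; split; first exact: T_dsum.
rewrite /db_iso T_dsum => /dsum_idem_eq0 TA0.
by have := T_base Alr; rewrite TA0.
Qed.
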